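(* Let $\ell\ge2$ and let $Z^{(\ell-1)},Z^{(\ell)}$ be consecutive iterates of the iterative SDP described in the context (in particular both are symmetric positive semidefinite). Suppose that $Z^{(\ell-1)}\neq0$ and $$\hat\varepsilon(Z^{(\ell)},Z^{(\ell-1)})\le\hat\varepsilon(Z^{(\ell-1)},Z^{(\ell-1)}).$$ Then $\varepsilon(Z^{(\ell)})\le\varepsilon(Z^{(\ell-1)})$. Moreover, if the assumed inequality is strict, then $\varepsilon(Z^{(\ell)})<\varepsilon(Z^{(\ell-1)})$.
   Context: For symmetric $Y\in\mathbb{R}^{p\times p}$, $\lambda_1(Y)\ge\dots\ge\lambda_p(Y)$ are its eigenvalues, $\nu_1(Y)$ a unit eigenvector for $\lambda_1(Y)$. With $p=n(n+m)$, $\varepsilon(Z):=\sum_{i=2}^p|\lambda_i(Z)|$ and $\hat\varepsilon(Z,Z'):=\mathrm{tr}(Z)-\nu_1(Z')^\top Z\nu_1(Z')$. Iterative SDP: given $\tilde\beta\in(0,1)$, $\eta\ge0$, $Z_{\rm ub}>0$, symmetric-matrix-valued functions $S^{(k)}_{\rm lmi}(Q,Z,\tilde\beta)\in\mathbb{R}^{2\tilde n\times2\tilde n}$ ($k=1,\dots,N$, $\tilde n=n(n+1)/2$) affine in $(Q,Z)$, and $Z'$, consider the problem: minimize $\hat\varepsilon(Z,Z')$ over symmetric $Z\in\mathbb{R}^{p\times p}$ and symmetric $Q^{(1)},\dots,Q^{(N)}\in\mathbb{R}^{\tilde n\times\tilde n}$ subject to $S^{(k)}_{\rm lmi}(Q^{(k)},Z,\tilde\beta)\succeq\eta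 I_{2\tilde n}$ and $Q^{(k)}\succeq\eta I_{\tilde n}$ for all $k$, $Z\succeq0$, $\mathrm{tr}(Z)\le Z_{\rm ub}$. $Z^{(1)}$ is a solution of this problem with the objective replaced by $\mathrm{tr}(Z)$, and for $\ell\ge2$, $Z^{(\ell)}$ is a solution with $Z'=Z^{(\ell-1)}$. *)

From HB Require Import structures.
From mathcomp Require Import all_boot all_order all_algebra.
From mathcomp Require Import reals.
From Stdlib Require Import ClassicalEpsilon.
Set Implicit Arguments.
Unset Strict Implicit.
Unset Printing Implicit Defensive.
Import Order.TTheory GRing.Theory Num.Theory.
Local Open Scope ring_scope.

Section Spec.
Variable R : realType.

Definition symmx {k} (A : 'M[R]_k) : Prop := A^T = A.

Definition psdmx {k} (A : 'M[R]_k) : Prop :=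
  forall x : 'cV[R]_k, 0 <= (x^T *m A *m x) 0 0.

Definition is_spectrum {k} (A : 'M[R]_k) (s : seq R) : Prop :=
  sorted (fun x y => y <= x) s /\ char_poly A = \prod_(x <- s) ('X - x%:P).

(* The (nonincreasing) eigenvalue list lambda_1(A) >= ... >= lambda_k(A).
   (For symmetric real matrices such a list exists and is unique.) *)
Definition eigvals {k} (A : 'M[R]_k) : seq R :=
  epsilon (inhabits [::]) (is_spectrum A).

Definition lambda1 {k} (A : 'M[R]_k) : R := head 0 (eigvals A).

Definition is_nu1 {k} (A : 'M[R]_k) (v : 'cV[R]_k) : Prop :=
  (v^T *m v) 0 0 = 1 /\ A *m v = lambda1 A *: v.

Definition eps {k} (Z : 'M[R]_k) : R := \sum_(x <- behead (eigvals Z)) `|x|.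

(* hat-epsilon(Z,Z') = tr Z - nu_1(Z')^T Z nu_1(Z'), with v = nu_1(Z'). *)
Definition epshat {k} (Z : 'M[R]_k) (v : 'cV[R]_k) : R :=
  \tr Z - (v^T *m Z *m v) 0 0.

Definition pdim (n m : nat) : nat := (n * (n + m))%N.
Definition ntil (n : nat) : nat := ((n * n.+1)./2)%N.

Definition affine2 {a b c} (S : 'M[R]_a -> 'M[R]_b -> 'M[R]_c) : Prop :=
  forall (t : R) Q1 Q2 Z1 Z2,
    S (t *: Q1 + (1 - t) *: Q2) (t *: Z1 + (1 - t) *: Z2)
    = t *: S Q1 Z1 + (1 - t) *: S Q2 Z2.

Definition sdp_feasible (n m N : nat) (beta eta Zub : R)
  (S : 'I_N -> 'M[R]_(ntil n) -> 'M[R]_(pdim n m) -> R -> 'M[R]_(2 * ntil n))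
  (Z : 'M[R]_(pdim n m)) (Q : 'I_N -> 'M[R]_(ntil n)) : Prop :=
  symmx Z /\
  (forall k, symmx (Q k)) /\
  (forall k, psdmx (S k (Q k) Z beta - eta%:M)) /\
  (forall k, psdmx (Q k - eta%:M)) /\
  psdmx Z /\
  \tr Z <= Zub.

Definition sdp_iterates (n m N : nat) (beta eta Zub : R)
  (S : 'I_N -> 'M[R]_(ntil n) -> 'M[R]_(pdim n m) -> R -> 'M[R]_(2 * ntil n))
  (Zs : nat -> 'M[R]_(pdim n m)) (Qs : nat -> 'I_N -> 'M[R]_(ntil n))
  (vs : nat -> 'cV[R]_(pdim n m)) : Prop :=
  (forall l, (1 <= l)%N -> is_nu1 (Zs l) (vs l)) /\
  (sdp_feasible beta eta Zub S (Zs 1%N) (Qs 1%N) /\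
   forall Z Q, sdp_feasible beta eta Zub S Z Q -> \tr (Zs 1%N) <= \tr Z) /\
  (forall l, (2 <= l)%N ->
     sdp_feasible beta eta Zub S (Zs l) (Qs l) /\
     forall Z Q, sdp_feasible beta eta Zub S Z Q ->
       epshat (Zs l) (vs l.-1) <= epshat Z (vs l.-1)).

End Spec.

From HB Require Import structures.
From mathcomp Require Import all_boot all_order all_algebra.
From mathcomp Require Import reals complex.
From Stdlib Require Import ClassicalEpsilon.
Import Order.TTheory GRing.Theory Num.Theory.
Local Open Scope ring_scope.

(* For a symmetric positive semidefinite Z all eigenvalues are nonnegative, so
   eps Z = tr Z - lambda_1(Z).  By the Rayleigh bound v^T Z v <= lambda_1(Z) for
   unit v, hence eps Z <= epshat(Z, v), with equality when v is a top unit
   eigenvector of Z.  Chaining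
     eps Z_l <= epshat(Z_l, nu_1(Z_(l-1))) <= epshat(Z_(l-1), nu_1(Z_(l-1))) = eps Z_(l-1)
   gives the claim; only feasibility of the iterates is used, not their
   optimality, nor Z_(l-1) <> 0. *)

Lemma char_poly_similar (F : fieldType) k (P A : 'M[F]_k) : P \in unitmx ->
  char_poly (invmx P *m A *m P) = char_poly A.
Proof.
move=> Punit; rewrite /char_poly /char_poly_mx.
have -> : 'X%:M - map_mx polyC (invmx P *m A *m P) =
    map_mx polyC (invmx P) *m ('X%:M - map_mx polyC A) *m map_mx polyC P.
  rewrite mulmxBr mulmxBl !map_mxM; congr (_ - _).
  by rewrite scalar_mxC -mulmxA -map_mxM mulVmx // map_mx1 mulmx1.
rewrite !det_mulmx !det_map_mx mulrC mulrA -rmorphM -det_mulmx mulmxV //.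
by rewrite det1 rmorph1 mul1r.
Qed.

Lemma char_poly_diag_mx (F : fieldType) k (d : 'rV[F]_k) :
  char_poly (diag_mx d) = \prod_(i < k) ('X - (d 0 i)%:P).
Proof.
rewrite char_poly_trig ?diag_mx_is_trig //.
by apply: eq_bigr => i _; rewrite mxE eqxx mulr1n.
Qed.

Lemma sorted_ge_head d (T : porderType d) (x0 x : T) (s : seq T) :
  sorted >=%O s -> x \in s -> (x <= head x0 s)%O.
Proof.
case: s => [|h t] //= srt; rewrite inE => /predU1P [->|xt] //.
by move: (order_path_min (rev_trans le_trans) srt) => /allP /(_ x xt).
Qed.

Lemma mulmx_tr_row_gt0 (R : realDomainType) k (v : 'rV[R]_k) :
  v != 0 -> 0 < (v *m v^T) 0 0.
Proof.
move=> v0; have sq_ge0 j : 0 <= v 0 j * v^T j 0 by rewrite mxE -expr2 sqr_ge0.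
rewrite mxE lt_def sumr_ge0 // andbT; apply: contra v0 => /eqP sum0.
apply/eqP/rowP => j; have := @psumr_eq0P _ _ _ _ (fun j _ => sq_ge0 j) sum0 j isT.
by rewrite !mxE -expr2 => /eqP; rewrite sqrf_eq0 => /eqP.
Qed.

Section RealSymmetric.
Context {R : rcfType}.
Local Notation toC := (real_complex R).
Local Open Scope sesquilinear_scope.

Lemma real_complex_real (x : R) : toC x \is Num.real.
Proof. by rewrite realE !lecE /= eqxx /= le_total. Qed.

(* The library spectral theorem is stated for hermitian matrices over a
   numClosedFieldType, hence the detour through R[i]. *)
Lemma symmx_unitary_diag {k} {Z : 'M[R]_k} : Z^T = Z ->
  exists P : 'M[R[i]]_k, exists r : 'rV[R]_k,
    P \is unitarymx /\ map_mx toC Z = invmx P *m diag_mx (map_mx toC r) *m P.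
Proof.
move=> Zsym; set ZC := map_mx toC Z.
have ZCherm : ZC \is hermsymmx.
  apply: realsym_hermsym.
    by apply/is_hermitianmxP; rewrite expr0 scale1r map_mx_id // map_trmx Zsym.
  by apply/mxOverP => i j; rewrite mxE real_complex_real.
have /hermitian_normalmx /orthomx_spectralP ZCE := ZCherm.
have /mxOverP diag_real := hermitian_spectral_diag_real ZCherm.
exists (spectralmx ZC), (map_mx (@complex.Re R) (spectral_diag ZC)).
split; first exact: spectral_unitarymx.
rewrite {1}ZCE; congr (_ *m diag_mx _ *m _); apply/matrixP => i j.
by rewrite !mxE complexRe; apply/esym/Creal_ReP/diag_real.
Qed.

Lemma symmx_real_spectrum {k} {Z : 'M[R]_k} : Z^T = Z ->
  exists r : 'rV[R]_k,
    char_poly Z = \prod_(i < k) ('X - (r 0 i)%:P) /\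
    forall lam, (forall i, r 0 i <= lam) ->
      forall v : 'cV[R]_k, (v^T *m Z *m v) 0 0 <= lam * (v^T *m v) 0 0.
Proof.
move=> /symmx_unitary_diag [P [r [Pu ZE]]]; have Punit := unitarymx_unit Pu.
exists r; split.
  apply: (@map_poly_inj _ _ toC).
  rewrite map_char_poly ZE char_poly_similar // char_poly_diag_mx map_prod_XsubC.
  by apply: eq_bigr => i _; rewrite mxE.
(* With u = P v both forms diagonalise: v^T Z v = sum r_i |u_i|^2 and v^T v = sum |u_i|^2. *)
move=> lam lam_ub v; pose u := P *m map_mx toC v.
have vTC : (map_mx toC v)^t* = map_mx toC v^T.
  by apply/matrixP => i j; rewrite !mxE; apply/CrealP/real_complex_real.
have quadE : map_mx toC (v^T *m Z *m v) = u^t* *m diag_mx (map_mx toC r) *m u.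
  by rewrite !map_mxM ZE invmx_unitary // /u trmx_mul map_mxM vTC !mulmxA.
have normE : map_mx toC (v^T *m v) = u^t* *m u.
  rewrite map_mxM /u trmx_mul map_mxM vTC -!mulmxA (mulmxA _ P).
  by rewrite -invmx_unitary // mulVmx // mul1mx.
have toC00 (M : 'M[R]_1) : toC (M 0 0) = map_mx toC M 0 0 by rewrite mxE.
rewrite -lecR rmorphM /= !toC00 quadE normE -mulmxA mul_diag_mx !mxE mulr_sumr.
apply: ler_sum => j _; rewrite !mxE mulrCA; apply: ler_wpM2r.
  by rewrite mulrC mul_conjC_ge0.
by rewrite lecR.
Qed.
End RealSymmetric.

Section Eigenvalues.
Context {R : realType} {k : nat} {Z : 'M[R]_k}.
Hypotheses (Zsym : symmx Z) (Zpsd : psdmx Z).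

Lemma eigvals_spectrum : is_spectrum Z (eigvals Z).
Proof.
have [r [charZ _]] := symmx_real_spectrum Zsym; apply: epsilon_spec.
exists (sort >=%O [seq r 0 i | i <- enum 'I_k]); split.
  by apply: sort_sorted => x y; exact: le_total.
by rewrite charZ (perm_big _ (permEl (perm_sort _ _))) big_map big_enum.
Qed.

Lemma size_eigvals : size (eigvals Z) = k.
Proof.
have [_ charZ] := eigvals_spectrum.
by apply: succn_inj; rewrite -(size_char_poly Z) charZ size_prod_XsubC.
Qed.

Lemma mxtrace_eigvals : \tr Z = \sum_(x <- eigvals Z) x.
Proof.
have [_ charZ] := eigvals_spectrum; move: size_eigvals charZ.
case: k Z => [|k'] Z' sizeZ charZ.
  by rewrite /mxtrace big_ord0; case: (eigvals Z') sizeZ => // _; rewrite big_nil.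
by apply: oppr_inj; rewrite -char_poly_trace // charZ -coefPn_prod_XsubC ?sizeZ.
Qed.

Lemma mem_eigvals x : (x \in eigvals Z) = root (char_poly Z) x.
Proof. by have [_ ->] := eigvals_spectrum; rewrite root_prod_XsubC. Qed.

Lemma psd_eigenvalue_ge0 a : eigenvalue Z a -> 0 <= a.
Proof.
move=> /eigenvalueP [v Zv v0]; have := Zpsd v^T.
by rewrite trmxK Zv -scalemxAl mxE pmulr_lge0 // mulmx_tr_row_gt0.
Qed.

Lemma eigvals_ge0 x : x \in eigvals Z -> 0 <= x.
Proof. by rewrite mem_eigvals -eigenvalue_root_char; exact: psd_eigenvalue_ge0. Qed.

Lemma quad_le_lambda1 (v : 'cV[R]_k) :
  (v^T *m Z *m v) 0 0 <= lambda1 Z * (v^T *m v) 0 0.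
Proof.
have [sortedZ _] := eigvals_spectrum.
have [r [charZ quad_le]] := symmx_real_spectrum Zsym.
apply: quad_le => i; apply: sorted_ge_head => //.
by rewrite mem_eigvals charZ (bigD1 i) //= rootM root_XsubC eqxx.
Qed.

Lemma eps_psd : eps Z = \tr Z - lambda1 Z.
Proof.
rewrite mxtrace_eigvals /eps /lambda1; move: eigvals_ge0.
case: (eigvals Z) => [|x s] eig_ge0 /=; first by rewrite !big_nil subr0.
rewrite big_cons addrAC subrr add0r; apply: eq_big_seq => y ys.
by rewrite ger0_norm // eig_ge0 // mem_behead.
Qed.

Lemma eps_le_epshat (v : 'cV[R]_k) : (v^T *m v) 0 0 = 1 -> eps Z <= epshat Z v.
Proof.
move=> v1; rewrite eps_psd /epshat lerB //.
by rewrite -[lambda1 Z]mulr1 -v1 quad_le_lambda1.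
Qed.

Lemma epshat_nu1 {v : 'cV[R]_k} : is_nu1 Z v -> epshat Z v = eps Z.
Proof. by move=> [v1 Zv]; rewrite eps_psd /epshat -mulmxA Zv -scalemxAr mxE v1 mulr1. Qed.

End Eigenvalues.

Lemma sdp_iterate_sym_psd {R : realType} {n m N : nat} {beta eta Zub : R}
  {S : 'I_N -> 'M[R]_(ntil n) -> 'M[R]_(pdim n m) -> R -> 'M[R]_(2 * ntil n)}
  {Zs : nat -> 'M[R]_(pdim n m)} {Qs : nat -> 'I_N -> 'M[R]_(ntil n)}
  {vs : nat -> 'cV[R]_(pdim n m)} {l : nat} :
  sdp_iterates beta eta Zub S Zs Qs vs -> (1 <= l)%N ->
  symmx (Zs l) /\ psdmx (Zs l).
Proof.
move=> [_ [[feas1 _] feas]] l_ge1.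
have [Zsym [_ [_ [_ [Zpsd _]]]]] : sdp_feasible beta eta Zub S (Zs l) (Qs l).
  by case: l l_ge1 => [|[|l]] // _; exact: (feas l.+2 isT).1.
by split.
Qed.

Theorem theorem9 (R : realType) (n m N : nat) (beta eta Zub : R)
  (S : 'I_N -> 'M[R]_(ntil n) -> 'M[R]_(pdim n m) -> R -> 'M[R]_(2 * ntil n))
  (Zs : nat -> 'M[R]_(pdim n m)) (Qs : nat -> 'I_N -> 'M[R]_(ntil n))
  (vs : nat -> 'cV[R]_(pdim n m)) (l : nat) :
  0 < beta < 1 -> 0 <= eta -> 0 < Zub ->
  (forall k Q Z, symmx Q -> symmx Z -> symmx (S k Q Z beta)) ->
  (forall k, affine2 (fun Q Z => S k Q Z beta)) ->
  sdp_iterates beta eta Zub S Zs Qs vs ->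
  (2 <= l)%N ->
  Zs l.-1 != 0 ->
  epshat (Zs l) (vs l.-1) <= epshat (Zs l.-1) (vs l.-1) ->
  eps (Zs l) <= eps (Zs l.-1) /\
  (epshat (Zs l) (vs l.-1) < epshat (Zs l.-1) (vs l.-1) ->
   eps (Zs l) < eps (Zs l.-1)).
Proof.
move=> _ _ _ _ _ iters l_ge2 _ hat_le.
have prev_ge1 : (1 <= l.-1)%N by case: l l_ge2 {hat_le} => [|[|l]].
have [Zsym Zpsd] := sdp_iterate_sym_psd iters (ltnW l_ge2).
have [Zsym' Zpsd'] := sdp_iterate_sym_psd iters prev_ge1.
have nu1 : is_nu1 (Zs l.-1) (vs l.-1) := iters.1 _ prev_ge1.
have eps_prev := epshat_nu1 Zsym' Zpsd' nu1.
have eps_le := eps_le_epshat Zsym Zpsd (vs l.-1) nu1.1.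
rewrite -eps_prev; split => [|hat_lt]; first exact: le_trans hat_le.
exact: le_lt_trans hat_lt.
Qed.
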